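(* Let $p,q,k$ be nonnegative integers with $k\le2\min\{p,q\}$, let $Q$ be a binary quadratic form with discriminant $\Delta$, and let $\mathcal{T}=(Q^p,Q^q)_k$. If $k$ is odd then $\mathcal{T}=0$. If $k=2m$ is even then $$\mathcal{T}=Q^{p+q-2m}\,(-\Delta)^m\,\mathcal{N}^{\rm II}_{p,q,m},\qquad \mathcal{N}^{\rm II}_{p,q,m}=\frac{p!\,q!\,(2m)!\,(p+q-m)!\,(2p-2m)!\,(2q-2m)!}{(2p)!\,(2q)!\,m!\,(p+q-2m)!\,(p-m)!\,(q-m)!}.$$
   Context: For binary forms $A,B$ in $(x_0,x_1)$ of degrees $a,b$ and $k\ge0$, $(A,B)_k=\frac{(a-k)!(b-k)!}{a!\,b!}\bigl[\Omega^kA(x_0,x_1)B(y_0,y_1)\bigr]_{\underline{y}:=\underline{x}}$ with $\Omega=\frac{\partial^2}{\partial x_0\partial y_1}-\frac{\partial^2}{\partial x_1\partial y_0}$. The discriminant is normalized so that for $Q=\lambda x_0^2+\mu x_0x_1+\nu x_1^2$ one has $\Delta=\mu^2-4\lambda\nu$; equivalently, if $Q=(r_0x_0+r_1x_1)(s_0x_0+s_1x_1)$ then $\Delta=(r_0s_1-r_1s_0)^2$. *)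

From HB Require Import structures.
From mathcomp Require Import all_boot all_order all_algebra.
From mathcomp Require Import mpoly.
Set Implicit Arguments. Unset Strict Implicit. Unset Printing Implicit Defensive.
Import GRing.Theory.
Local Open Scope ring_scope.

(* Binary forms in (x0,x1) are elements of {mpoly R[2]} (variables 'X_0 = x0,
   'X_1 = x1).  To apply Omega we work in {mpoly R[4]} with
   'X_0 = x0, 'X_1 = x1, 'X_2 = y0, 'X_3 = y1. *)

Section Transvectant.
Variable R : fieldType.

Definition ix4 (i : nat) : 'I_4 := inord i.

Definition in_x (A : {mpoly R[2]}) : {mpoly R[4]} :=
  comp_mpoly [tuple 'X_(ix4 0); 'X_(ix4 1)] A.
Definition in_y (B : {mpoly R[2]}) : {mpoly R[4]} :=
  comp_mpoly [tuple 'X_(ix4 2); 'X_(ix4 3)] B.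
Definition diag_xy (F : {mpoly R[4]}) : {mpoly R[2]} :=
  comp_mpoly [tuple 'X_(inord 0 : 'I_2); 'X_(inord 1 : 'I_2);
                    'X_(inord 0 : 'I_2); 'X_(inord 1 : 'I_2)] F.

Definition Omega (F : {mpoly R[4]}) : {mpoly R[4]} :=
  mderiv (ix4 0) (mderiv (ix4 3) F) - mderiv (ix4 1) (mderiv (ix4 2) F).

(* k-th transvectant (A,B)_k of forms A, B of degrees a, b *)
Definition transvectant (a b k : nat) (A B : {mpoly R[2]}) : {mpoly R[2]} :=
  (((a - k)`! * (b - k)`!)%:R / ((a`! * b`!)%:R)) *:
    diag_xy (iter k Omega (in_x A * in_y B)).

Definition quadform (lam mu nu : R) : {mpoly R[2]} :=
  lam *: ('X_(inord 0 : 'I_2) ^+ 2)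
  + mu *: ('X_(inord 0 : 'I_2) * 'X_(inord 1 : 'I_2))
  + nu *: ('X_(inord 1 : 'I_2) ^+ 2).

Definition discr (lam mu nu : R) : R := mu ^+ 2 - 4%:R * lam * nu.

Definition NII (p q m : nat) : R :=
  (p`! * q`! * (2 * m)`! * (p + q - m)`! * (2 * p - 2 * m)`! * (2 * q - 2 * m)`!)%:R
  / ((2 * p)`! * (2 * q)`! * m`! * (p + q - 2 * m)`! * (p - m)`! * (q - m)`!)%:R.

End Transvectant.

(* Write Qx = Q(x0,x1), Qy = Q(y0,y1) and Wxy = x0 y1 - x1 y0.  The Leibniz rule for Omega,
   Euler's identity for the quadratic forms Qx and Qy, and the identity
   dQx/dx0 dQy/dy1 - dQx/dx1 dQy/dy0 = - Delta Wxy give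
     Omega (Qx^a Qy^b Wxy^d) = d (d + 1 + 2a + 2b) Qx^a Qy^b Wxy^(d-1)
                               - a b Delta Qx^(a-1) Qy^(b-1) Wxy^(d+1).
   Hence Omega^k (Qx^p Qy^q) is a combination of the terms (-Delta)^u Qx^(p-u) Qy^(q-u) Wxy^(2u-k)
   whose integer coefficients obey a two-term recurrence in k.  The substitution y := x kills Wxy,
   so only the term u = k/2 survives: T = 0 for odd k, and for k = 2m it remains to evaluate
   one coefficient, which the recurrence gives in closed form as a product of falling factorials. *)

From HB Require Import structures.
From mathcomp Require Import all_boot all_order all_algebra.
From mathcomp Require Import mpoly.
From mathcomp Require Import ring zify.
Import GRing.Theory.

(* The coefficient of (-Delta)^u Qx^(p-u) Qy^(q-u) Wxy^(2u-j) in Omega^j (Qx^p Qy^q), see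
   iter_Omega_qqw; the recurrence is read off Omega_qqw. *)
Fixpoint omega_coef (p q j u : nat) : nat :=
  if j is j.+1 then
    omega_coef p q j u * ((2 * u - j) * (2 * u - j + 1 + 2 * (p - u) + 2 * (q - u)))
    + (if u is u.+1 then omega_coef p q j u * ((p - u) * (q - u)) else 0)
  else u == 0.

Lemma omega_coef_gt p q j u : j < u -> omega_coef p q j u = 0.
Proof. by elim: j u => [|j IH] [|u] //= lt_ju; rewrite !IH // ltnW. Qed.

Definition omega_coef_closed p q j u :=
  p ^_ u * q ^_ u * (p + q - u) ^_ (j - u) * j ^_ (2 * (j - u)).

Lemma omega_coef_closedS p q {j u} : u < j ->
  omega_coef_closed p q j.+1 u.+1 =
    (j - u) * ((2 * u.+1 - j) * (2 * u.+1 - j + 1 + 2 * (p - u.+1) + 2 * (q - u.+1)))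
      * omega_coef_closed p q j u.+1
    + omega_coef_closed p q j u * ((p - u) * (q - u)).
Proof.
move=> lt_uj; have [v ->] : exists v, j = u.+1 + v by exists (j - u.+1); lia.
rewrite /omega_coef_closed.
have -> : (u.+1 + v).+1 - u.+1 = v.+1 by lia.
have -> : u.+1 + v - u.+1 = v by lia.
have -> : u.+1 + v - u = v.+1 by lia.
have -> : 2 * u.+1 - (u.+1 + v) = u.+1 - v by lia.
have -> : 2 * v.+1 = (2 * v).+2 by lia.
case: (leqP p u) => [hp | /subnKC <-].
  by rewrite (_ : p - u = 0) 1?(@ffact_small p u.+1) ?(muln0, mul0n) //; lia.
case: (leqP q u) => [hq | /subnKC <-].
  by rewrite (_ : q - u = 0) 1?(@ffact_small q u.+1) ?(muln0, mul0n) //; lia.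
move: (p - u.+1) (q - u.+1) => a b.
have -> : u.+1 + a + (u.+1 + b) - u.+1 = u.+1 + a + b by lia.
have -> : u.+1 + a + (u.+1 + b) - u = (u.+1 + a + b).+1 by lia.
rewrite [(u.+1 + a + b).+1 ^_ _]ffactSS [(u.+1 + v).+1 ^_ _]ffactSS !ffactnSr.
have -> : u.+1 + a - u = a.+1 by lia.
have -> : u.+1 + b - u = b.+1 by lia.
have -> : u.+1 + a - u.+1 = a by lia.
have -> : u.+1 + b - u.+1 = b by lia.
have -> : u.+1 + v - (2 * v).+1 = u - v by lia.
have -> : u.+1 + v - 2 * v = u.+1 - v by lia.
move: ((u.+1 + a) ^_ u) ((u.+1 + b) ^_ u) ((u.+1 + a + b) ^_ v) ((u.+1 + v) ^_ (2 * v))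
  => P Q E X.
(* For v > u every term carries the factor u.+1 - v = 0. *)
case: (leqP v u) => [/subnKC <- | lt_uv]; last first.
  by rewrite (_ : u.+1 - v = 0) ?(muln0, mul0n) //; lia.
move: (u - v) => w.
have -> : (v + w).+1 - v = w.+1 by lia.
have -> : v + w - v = w by lia.
have -> : (v + w).+1 + a + b - v = w.+1 + a + b by lia.
lia.
Qed.

Lemma omega_coefE p q {j u} : u <= j ->
  omega_coef p q j u * (j - u)`! = omega_coef_closed p q j u.
Proof.
elim: j u => [|j IH] [|u] // le_uj /=.
- rewrite /omega_coef_closed muln0 sub0n mul0n muln0 addn0 mul0n.
  by rewrite (@ffact_small j.+1) ?muln0 //; lia.
- rewrite subSS mulnDl; move: le_uj; rewrite ltnS leq_eqVlt => /predU1P [-> | lt_uj].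
    rewrite omega_coef_gt // mul0n add0n subnn fact0 muln1.
    have := IH j (leqnn j); rewrite subnn fact0 muln1 => ->.
    by rewrite /omega_coef_closed !subnn !ffactn0 !muln1 !ffactnSr; lia.
  rewrite (omega_coef_closedS p q lt_uj) -IH // -IH 1?ltnW //.
  rewrite (_ : j - u = (j - u.+1).+1) ?factS; last lia.
  lia.
Qed.

Lemma omega_coef_lt p q j u : 2 * u < j -> omega_coef p q j u = 0.
Proof.
move=> lt_2u_j; have le_uj : u <= j by lia.
have := omega_coefE p q le_uj; rewrite /omega_coef_closed (@ffact_small j) ?muln0; last lia.
by move/eqP; rewrite muln_eq0 => /orP [/eqP // |]; rewrite eqn0Ngt fact_gt0.
Qed.

Lemma omega_coef_mid {p q m} : m <= p -> m <= q ->
  omega_coef p q (2 * m) m * (m`! * (p + q - 2 * m)`! * (p - m)`! * (q - m)`!) =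
  p`! * q`! * (2 * m)`! * (p + q - m)`!.
Proof.
move=> le_mp le_mq.
have := omega_coefE p q (leq_pmull m (isT : 0 < 2)).
rewrite /omega_coef_closed (_ : 2 * m - m = m); last lia.
rewrite (ffactnn (2 * m)) !mulnA => ->.
rewrite -(ffact_fact le_mp) -(ffact_fact le_mq) -(@ffact_fact (p + q - m) m); last lia.
rewrite (_ : p + q - m - m = p + q - 2 * m); last lia.
lia.
Qed.

Local Open Scope ring_scope.

Lemma mderivXU n (R : comRingType) (i j : 'I_n) :
  mderiv i ('X_j : {mpoly R[n]}) = (j == i)%:R.
Proof.
rewrite mderivX mnm1E; case: eqP => [->|_]; last by rewrite scale0r.
have -> : (U_(i) - U_(i) = 0)%MM by apply/mnmP => k; rewrite mnmBE subnn mnm0E.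
by rewrite mpolyX0 scale1r.
Qed.

Lemma mderiv_exp n (R : comRingType) i (p : {mpoly R[n]}) k :
  mderiv i (p ^+ k) = k%:R * p ^+ k.-1 * mderiv i p.
Proof.
elim: k => [|k IH]; first by rewrite expr0 -(mpolyC1 n R) mderivC !mul0r.
rewrite exprS mderivM IH; case: k {IH} => [|k] /=; rewrite ?expr0 ?exprS; ring.
Qed.

Section Transvectant.
Variable R : fieldType.

Local Notation P4 := {mpoly R[4]}.
Local Notation i0 := (ix4 0).
Local Notation i1 := (ix4 1).
Local Notation i2 := (ix4 2).
Local Notation i3 := (ix4 3).
Local Notation x0 := ('X_i0 : P4).
Local Notation x1 := ('X_i1 : P4).
Local Notation y0 := ('X_i2 : P4).
Local Notation y1 := ('X_i3 : P4).

Lemma Omega_is_linear : linear (@Omega R).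
Proof. by move=> c F G; rewrite /Omega !linearP /=; ring. Qed.

HB.instance Definition _ := GRing.isLinear.Build R _ _ _ (@Omega R) Omega_is_linear.

Lemma Omega1 : Omega 1 = 0 :> P4.
Proof. by rewrite /Omega -(mpolyC1 4 R) !mderivC ?mderiv0 subr0. Qed.

Lemma OmegaZ c (F : P4) : Omega (c *: F) = c *: Omega F.
Proof. exact: linearZ. Qed.

Lemma Omega_sum I r (P : pred I) (F : I -> P4) :
  Omega (\sum_(i <- r | P i) F i) = \sum_(i <- r | P i) Omega (F i).
Proof. exact: raddf_sum. Qed.

Lemma diag_xyZ c (F : P4) : diag_xy (c *: F) = c *: diag_xy F.
Proof. exact: comp_mpolyZ. Qed.

Lemma diag_xy_sum I r (P : pred I) (F : I -> P4) :
  diag_xy (\sum_(i <- r | P i) F i) = \sum_(i <- r | P i) diag_xy (F i).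
Proof. exact: raddf_sum. Qed.

Lemma ix4_eq (a b : nat) : (a < 4)%N -> (b < 4)%N -> (ix4 a == ix4 b) = (a == b).
Proof. by move=> ha hb; rewrite /ix4 -val_eqE /= !inordK. Qed.

Lemma mderivXU4 (a b : nat) : (a < 4)%N -> (b < 4)%N ->
  mderiv (ix4 a) ('X_(ix4 b) : P4) = (a == b)%:R.
Proof. by move=> ha hb; rewrite mderivXU ix4_eq // eq_sym. Qed.

Lemma mderiv_nat i n : mderiv i (n%:R : P4) = 0.
Proof. by rewrite -mpolyC_nat mderivC. Qed.

Definition euler4 (F : P4) :=
  x0 * F^`M(i0) + x1 * F^`M(i1) + y0 * F^`M(i2) + y1 * F^`M(i3).

Definition Omega_polar (F G : P4) :=
  F^`M(i0) * G^`M(i3) + F^`M(i3) * G^`M(i0) - F^`M(i1) * G^`M(i2) - F^`M(i2) * G^`M(i1).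

Lemma Omega_mul (F G : P4) : Omega (F * G) = Omega F * G + F * Omega G + Omega_polar F G.
Proof. rewrite /Omega /Omega_polar !(mderivM, mderivD); ring. Qed.

Lemma Omega_polarXn (F G : P4) n :
  Omega_polar F (G ^+ n) = n%:R * G ^+ n.-1 * Omega_polar F G.
Proof. rewrite /Omega_polar !mderiv_exp; ring. Qed.

Lemma euler4M (F G : P4) : euler4 (F * G) = euler4 F * G + F * euler4 G.
Proof. rewrite /euler4 !mderivM; ring. Qed.

Lemma euler4Xn {F : P4} {c} :
  euler4 F = c%:R * F -> forall n, euler4 (F ^+ n) = (n * c)%:R * F ^+ n.
Proof.
move=> eF; elim=> [|n IH].
  by rewrite expr0 mul0n mul0r /euler4 -(mpolyC1 4 R) !mderivC !mulr0 !addr0.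
rewrite exprS euler4M IH eF natrM mulSn natrD; ring.
Qed.

Definition Wxy := x0 * y1 - x1 * y0.

Lemma Omega_polar_Wxy (F : P4) : Omega_polar F Wxy = euler4 F.
Proof. rewrite /Omega_polar /euler4 /Wxy !(mderivB, mderivM, mderivXU4) //=; ring. Qed.

Lemma euler4_Wxy : euler4 Wxy = 2%:R * Wxy.
Proof. rewrite /euler4 /Wxy !(mderivB, mderivM, mderivXU4) //=; ring. Qed.

Lemma Omega_Wxy : Omega Wxy = 2%:R :> P4.
Proof. rewrite /Omega /Wxy !(mderivB, mderivD, mderivM, mderivXU4, mderiv_nat) //=; ring. Qed.

Lemma Omega_WxyXn n : Omega (Wxy ^+ n) = (n * n.+1)%:R * Wxy ^+ n.-1 :> P4.
Proof.
case: n => [|n]; first by rewrite expr0 Omega1 mul0r.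
elim: n => [|n IH]; first by rewrite expr1 Omega_Wxy expr0 mulr1.
rewrite exprS Omega_mul IH Omega_Wxy Omega_polarXn Omega_polar_Wxy euler4_Wxy /= !exprS; ring.
Qed.

Lemma diag_xy_Wxy : diag_xy Wxy = 0.
Proof.
by rewrite /diag_xy /Wxy comp_mpolyB !rmorphM /= !comp_mpolyXU /ix4 !inordK //= mulrC subrr.
Qed.

Section QuadraticForm.
Variables lam mu nu : R.

Definition qform {n} (s t : {mpoly R[n]}) := lam *: s ^+ 2 + mu *: (s * t) + nu *: t ^+ 2.

Lemma quadformE : quadform lam mu nu = qform 'X_(inord 0) 'X_(inord 1).
Proof. by []. Qed.

Lemma comp_mpoly_qform n k (lq : n.-tuple {mpoly R[k]}) s t :
  qform s t \mPo lq = qform (s \mPo lq) (t \mPo lq).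
Proof. by rewrite /qform !raddfD /= !comp_mpolyZ !rmorphM. Qed.

Lemma mderiv_qform n i (s t : {mpoly R[n]}) :
  mderiv i (qform s t) = ((2 * lam)%:MP * s + mu%:MP * t) * mderiv i s
                        + (mu%:MP * s + (2 * nu)%:MP * t) * mderiv i t.
Proof. rewrite /qform !mderivD !mderivZ !mderivM -!mul_mpolyC; ring. Qed.

Definition Qx := qform x0 x1.
Definition Qy := qform y0 y1.
Definition qqw a b d := Qx ^+ a * Qy ^+ b * Wxy ^+ d.

Lemma qqw0 a b : qqw a b 0 = Qx ^+ a * Qy ^+ b.
Proof. by rewrite /qqw expr0 mulr1. Qed.

Lemma mderiv_Qx i : mderiv i Qx =
  ((2 * lam)%:MP * x0 + mu%:MP * x1) * (i0 == i)%:R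
  + (mu%:MP * x0 + (2 * nu)%:MP * x1) * (i1 == i)%:R.
Proof. by rewrite /Qx mderiv_qform !mderivXU. Qed.

Lemma mderiv_Qy i : mderiv i Qy =
  ((2 * lam)%:MP * y0 + mu%:MP * y1) * (i2 == i)%:R
  + (mu%:MP * y0 + (2 * nu)%:MP * y1) * (i3 == i)%:R.
Proof. by rewrite /Qy mderiv_qform !mderivXU. Qed.

Lemma euler4_Qx : euler4 Qx = 2%:R * Qx.
Proof. rewrite /euler4 !mderiv_Qx !ix4_eq //= /Qx /qform -!mul_mpolyC; ring. Qed.

Lemma euler4_Qy : euler4 Qy = 2%:R * Qy.
Proof. rewrite /euler4 !mderiv_Qy !ix4_eq //= /Qy /qform -!mul_mpolyC; ring. Qed.

Lemma mderivy_QxXn a : mderiv i2 (Qx ^+ a) = 0 /\ mderiv i3 (Qx ^+ a) = 0.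
Proof. by rewrite !mderiv_exp !mderiv_Qx !ix4_eq //= !(mulr0, addr0). Qed.

Lemma mderivx_QyXn b : mderiv i0 (Qy ^+ b) = 0 /\ mderiv i1 (Qy ^+ b) = 0.
Proof. by rewrite !mderiv_exp !mderiv_Qy !ix4_eq //= !(mulr0, addr0). Qed.

Lemma Omega_QxXn a : Omega (Qx ^+ a) = 0.
Proof. by rewrite /Omega; have [-> ->] := mderivy_QxXn a; rewrite !mderiv0 subr0. Qed.

Lemma Omega_QyXn b : Omega (Qy ^+ b) = 0.
Proof.
rewrite /Omega (mderiv_comm i3) (mderiv_comm i2).
by have [-> ->] := mderivx_QyXn b; rewrite !mderiv0 subr0.
Qed.

Lemma Omega_QxQy a b : Omega (Qx ^+ a * Qy ^+ b) =
  - ((a * b)%:R * discr lam mu nu) *: (Qx ^+ a.-1 * Qy ^+ b.-1 * Wxy) :> P4.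
Proof.
rewrite Omega_mul Omega_QxXn Omega_QyXn /Omega_polar.
have [-> ->] := mderivy_QxXn a; have [-> ->] := mderivx_QyXn b.
rewrite !mderiv_exp !mderiv_Qx !mderiv_Qy !ix4_eq //= /Wxy -!mul_mpolyC /discr; ring.
Qed.

Lemma Omega_qqw a b d : Omega (qqw a b d) =
  (d * (d + 1 + 2 * a + 2 * b))%:R *: qqw a b d.-1
  - ((a * b)%:R * discr lam mu nu) *: qqw a.-1 b.-1 d.+1 :> P4.
Proof.
have eG : euler4 (Qx ^+ a * Qy ^+ b) = (2 * a + 2 * b)%:R * (Qx ^+ a * Qy ^+ b).
  rewrite euler4M (euler4Xn euler4_Qx) (euler4Xn euler4_Qy); ring.
rewrite /qqw Omega_mul Omega_QxQy Omega_WxyXn Omega_polarXn Omega_polar_Wxy eG.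
rewrite -!mul_mpolyC exprS; ring.
Qed.

Lemma iter_Omega_qqw p q j : iter j (@Omega R) (qqw p q 0) =
  \sum_(u < j.+1)
    ((omega_coef p q j u)%:R * (- discr lam mu nu) ^+ u) *: qqw (p - u) (q - u) (2 * u - j).
Proof.
set De := discr lam mu nu.
elim: j => [|j IH]; first by rewrite big_ord1 /= !subn0 expr0 mulr1 scale1r.
rewrite iterS IH Omega_sum.
pose D u := ((2 * u - j) * (2 * u - j + 1 + 2 * (p - u) + 2 * (q - u)))%N.
pose T1 u := ((omega_coef p q j u * D u)%:R * (- De) ^+ u) *: qqw (p - u) (q - u) (2 * u - j.+1).
pose T2 u := ((omega_coef p q j u * ((p - u) * (q - u)))%:R * (- De) ^+ u.+1) *:
  qqw (p - u.+1) (q - u.+1) (2 * u.+1 - j.+1).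
transitivity (\sum_(u < j.+1) (T1 u + T2 u)).
  apply: eq_bigr => u _.
  rewrite OmegaZ Omega_qqw scalerBr !scalerA /T1 /T2 -/De -!subnS.
  case: (ltnP (2 * u) j) => [lt_2u_j | le_j_2u].
    by rewrite omega_coef_lt // !mul0n !mul0r !scale0r subr0 addr0.
  rewrite (_ : (2 * u - j).+1 = 2 * u.+1 - j.+1)%N; last lia.
  rewrite -scaleNr /D; congr (_ *: _ + _ *: _); rewrite !natrM ?exprS; ring.
rewrite big_split /=.
under [RHS]eq_bigr => u _ do rewrite /= natrD !mulrDl scalerDl.
rewrite big_split; congr (_ + _).
  by rewrite [RHS]big_ord_recr /= omega_coef_gt // mul0n mul0r scale0r addr0.
by rewrite [RHS]big_ord_recl /= mul0r scale0r add0r.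
Qed.

Local Notation Q := (quadform lam mu nu).

Lemma in_x_quadform : in_x Q = Qx.
Proof. by rewrite /in_x quadformE comp_mpoly_qform !comp_mpolyXU !inordK. Qed.

Lemma in_y_quadform : in_y Q = Qy.
Proof. by rewrite /in_y quadformE comp_mpoly_qform !comp_mpolyXU !inordK. Qed.

Lemma in_x_quadformXn n : in_x (Q ^+ n) = Qx ^+ n.
Proof. by rewrite -in_x_quadform /in_x rmorphXn. Qed.

Lemma in_y_quadformXn n : in_y (Q ^+ n) = Qy ^+ n.
Proof. by rewrite -in_y_quadform /in_y rmorphXn. Qed.

Lemma diag_xy_Qx : diag_xy Qx = Q.
Proof. by rewrite /diag_xy comp_mpoly_qform !comp_mpolyXU /ix4 !inordK. Qed.

Lemma diag_xy_Qy : diag_xy Qy = Q.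
Proof. by rewrite /diag_xy comp_mpoly_qform !comp_mpolyXU /ix4 !inordK. Qed.

Lemma diag_xy_qqw a b d : diag_xy (qqw a b d) = Q ^+ a * Q ^+ b * 0 ^+ d.
Proof.
by rewrite /qqw /diag_xy !rmorphM !rmorphXn /= -!/(diag_xy _) diag_xy_Qx diag_xy_Qy diag_xy_Wxy.
Qed.

Lemma diag_xy_iter_Omega p q k : diag_xy (iter k (@Omega R) (Qx ^+ p * Qy ^+ q)) =
  \sum_(u < k.+1 | (2 * u == k)%N)
    ((omega_coef p q k u)%:R * (- discr lam mu nu) ^+ u) *: Q ^+ (p - u + (q - u)).
Proof.
rewrite -qqw0 iter_Omega_qqw diag_xy_sum [RHS]big_mkcond /=; apply: eq_bigr => u _.
rewrite diag_xyZ diag_xy_qqw expr0n -exprD; case: (eqVneq (2 * u)%N k) => [-> | ne_2u_k].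
  by rewrite subnn eqxx mulr1.
case: (ltnP (2 * u) k) => [lt_2u_k | le_k_2u].
  by rewrite omega_coef_lt // mul0r scale0r.
by rewrite (_ : 2 * u - k == 0 = false)%N ?mulr0 ?scaler0 //; apply/negbTE; lia.
Qed.

End QuadraticForm.
End Transvectant.

Lemma omega_coef_NII {R : fieldType} {p q m} :
  [pchar R] =i pred0 -> (m <= p)%N -> (m <= q)%N ->
  ((2 * p - 2 * m)`! * (2 * q - 2 * m)`!)%:R / ((2 * p)`! * (2 * q)`!)%:R
    * (omega_coef p q (2 * m) m)%:R = NII R p q m.
Proof.
move=> /(pcharf0P R) charR0 le_mp le_mq.
have fact_neq0 n : (n`!%:R : R) != 0 by rewrite charR0 -lt0n fact_gt0.
have -> : (omega_coef p q (2 * m) m)%:R =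
    (p`! * q`! * (2 * m)`! * (p + q - m)`!)%:R /
    (m`! * (p + q - 2 * m)`! * (p - m)`! * (q - m)`!)%:R :> R.
  by rewrite -(omega_coef_mid le_mp le_mq) natrM mulfK // !natrM !mulf_neq0.
by rewrite /NII !natrM; field; rewrite !fact_neq0.
Qed.

Theorem mainTheorem10 (R : fieldType) (hchar : [pchar R] =i pred0)
  (lam mu nu : R) (p q k : nat) (hk : (k <= 2 * minn p q)%N) :
  let Q := quadform lam mu nu in
  let T := transvectant (2 * p) (2 * q) k (Q ^+ p) (Q ^+ q) in
  (odd k -> T = 0) /\
  (forall m : nat, k = (2 * m)%N ->
     T = ((- discr lam mu nu) ^+ m * NII R p q m) *: Q ^+ (p + q - 2 * m)).
Proof.
move=> Q T; rewrite /T /transvectant in_x_quadformXn in_y_quadformXn diag_xy_iter_Omega.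
split=> [odd_k | m km].
  rewrite big_pred0 ?scaler0 // => u; apply/negbTE.
  by apply: contraTneq odd_k => <-; rewrite oddM.
subst k; have [le_mp le_mq] : (m <= p /\ m <= q)%N by lia.
have lt_m_2m : (m < (2 * m).+1)%N by lia.
rewrite (big_pred1 (Ordinal lt_m_2m)) => [|u]; last by rewrite /= eqn_pmul2l // -val_eqE.
rewrite scalerA /= (_ : p - m + (q - m) = p + q - 2 * m)%N; last lia.
by congr (_ *: _); rewrite -(omega_coef_NII hchar le_mp le_mq); ring.
Qed.
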